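(* Let $M=\begin{pmatrix}A&B\\ C&D\end{pmatrix}$ be an operator matrix on $X\oplus Y$, where $A\in\mathcal{L}(X)$ and $D\in\mathcal{L}(Y)$ have g-Drazin inverses, $B\in\mathcal{L}(Y,X)$, $C\in\mathcal{L}(X,Y)$. If $ABC=0$, $DCA=0$, $DCB=0$ and $CBCB=0$, then $M$ has a g-Drazin inverse in $\mathcal{L}(X\oplus Y)$.
   Context: $X,Y$ are complex Banach spaces; $\mathcal{L}(X)$ denotes the Banach algebra of bounded linear operators on $X$, and $\mathcal{L}(Y,X)$ the bounded operators from $Y$ to $X$. An element $a$ of a unital Banach algebra $\mathcal{A}$ is quasinilpotent if $\lim_{n\to\infty}\|a^n\|^{1/n}=0$. An element $a\in\mathcal{A}$ has a g-Drazin (generalized Drazin) inverse if there exists $x\in\mathcal{A}$ with $x=xax$, $ax=xa$, and $a-a^2x$ quasinilpotent; such $x$ is unique and is denoted $a^d$. *)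

From Stdlib Require Import Reals Lra.
Open Scope R_scope.

Definition Cplx : Type := (R * R)%type.
Definition Cone : Cplx := (1, 0).
Definition Cadd (a b : Cplx) : Cplx := (fst a + fst b, snd a + snd b).
Definition Cmul (a b : Cplx) : Cplx :=
  (fst a * fst b - snd a * snd b, fst a * snd b + snd a * fst b).
Definition Cmod (a : Cplx) : R := sqrt (fst a ^ 2 + snd a ^ 2).

Record CNormed := {
  car :> Type;
  vzero : car;
  vadd : car -> car -> car;
  vopp : car -> car;
  vscal : Cplx -> car -> car;
  vnorm : car -> R;
  vadd_assoc : forall x y z, vadd x (vadd y z) = vadd (vadd x y) z;
  vadd_comm : forall x y, vadd x y = vadd y x;
  vadd_zero : forall x, vadd x vzero = x;
  vadd_opp : forall x, vadd x (vopp x) = vzero;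
  vscal_one : forall x, vscal Cone x = x;
  vscal_mul : forall a b x, vscal (Cmul a b) x = vscal a (vscal b x);
  vscal_addl : forall a b x, vscal (Cadd a b) x = vadd (vscal a x) (vscal b x);
  vscal_addr : forall a x y, vscal a (vadd x y) = vadd (vscal a x) (vscal a y);
  vnorm_nonneg : forall x, 0 <= vnorm x;
  vnorm_eq0 : forall x, vnorm x = 0 -> x = vzero;
  vnorm_triangle : forall x y, vnorm (vadd x y) <= vnorm x + vnorm y;
  vnorm_scal : forall a x, vnorm (vscal a x) = Cmod a * vnorm x
}.

Arguments vzero {c}.
Arguments vadd {c}.
Arguments vopp {c}.
Arguments vscal {c}.
Arguments vnorm {c}.

Definition vdist {X : CNormed} (x y : X) : R := vnorm (vadd x (vopp y)).

Definition complete (X : CNormed) : Prop :=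
  forall u : nat -> X,
    (forall eps, 0 < eps -> exists N, forall m n, (N <= m)%nat -> (N <= n)%nat ->
        vdist (u m) (u n) < eps) ->
    exists l : X, forall eps, 0 < eps -> exists N, forall n, (N <= n)%nat ->
        vdist (u n) l < eps.

Definition bounded_linear {X Y : CNormed} (f : X -> Y) : Prop :=
  (forall x y, f (vadd x y) = vadd (f x) (f y)) /\
  (forall a x, f (vscal a x) = vscal a (f x)) /\
  (exists K, forall x, vnorm (f x) <= K * vnorm x).

(** Quasinilpotent: lim ||a^n||^(1/n) = 0, written out with the operator norm:
    ||a^n||^(1/n) <= eps  iff  ||a^n x|| <= eps^n ||x|| for all x. *)
Definition quasinilpotent {X : CNormed} (a : X -> X) : Prop :=
  forall eps, 0 < eps -> exists N, forall n, (N <= n)%nat ->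
    forall x, vnorm (Nat.iter n a x) <= eps ^ n * vnorm x.

Definition has_gDrazin {X : CNormed} (a : X -> X) : Prop :=
  bounded_linear a /\
  exists x : X -> X, bounded_linear x /\
    (forall v, x (a (x v)) = x v) /\
    (forall v, a (x v) = x (a v)) /\
    quasinilpotent (fun v => vadd (a v) (vopp (a (a (x v))))).

Definition dsum (X Y : CNormed) : CNormed.
Proof.
  refine {| car := (X * Y)%type;
            vzero := (vzero, vzero);
            vadd := fun p q => (vadd (fst p) (fst q), vadd (snd p) (snd q));
            vopp := fun p => (vopp (fst p), vopp (snd p));
            vscal := fun a p => (vscal a (fst p), vscal a (snd p));
            vnorm := fun p => vnorm (fst p) + vnorm (snd p) |}.
  - intros [] [] []; simpl; now rewrite !vadd_assoc.
  - intros [] []; simpl; now rewrite (vadd_comm X), (vadd_comm Y).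
  - intros []; simpl; now rewrite !vadd_zero.
  - intros []; simpl; now rewrite !vadd_opp.
  - intros []; simpl; now rewrite !vscal_one.
  - intros a b []; simpl; now rewrite !vscal_mul.
  - intros a b []; simpl; now rewrite !vscal_addl.
  - intros a [] []; simpl; now rewrite !vscal_addr.
  - intros []; simpl; pose proof (vnorm_nonneg X c); pose proof (vnorm_nonneg Y c0); lra.
  - intros [x y]; simpl; intro H.
    pose proof (vnorm_nonneg X x); pose proof (vnorm_nonneg Y y).
    rewrite (vnorm_eq0 X x), (vnorm_eq0 Y y); auto; lra.
  - intros [] []; simpl.
    pose proof (vnorm_triangle X c c1); pose proof (vnorm_triangle Y c0 c2); lra.
  - intros a []; simpl; rewrite !vnorm_scal; ring.
Defined.

Definition opmat {X Y : CNormed} (A : X -> X) (B : Y -> X) (C : X -> Y) (D : Y -> Y)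
  : dsum X Y -> dsum X Y :=
  fun p => (vadd (A (fst p)) (B (snd p)), vadd (C (fst p)) (D (snd p))).

(** Write [M = P + Q] with [P = [[A, B], [C, 0]]] and [Q = [[0, 0], [0, D]]]; the
    hypotheses give [Q P^2 = 0] and [Q P Q = 0]. An operator has a g-Drazin inverse iff its
    square does, and [(P + Q)^2 = Q (P + Q) + P (P + Q)] is a sum with zero product. By
    Cline's formula ([u v] has a g-Drazin inverse iff [v u] has one), [P (P + Q)] and
    [Q (P + Q)] may be replaced by [Q P + P^2] and [Q^2 + P Q], again sums with zero
    product and a nilpotent summand. A sum [x + y] with [x y = 0] is the product [u v] of
    [u (z1, z2) = z1 + y z2] and [v z = (x z, z)], so by Cline's formula it reduces to the
    triangular matrix [v u = [[x, 0], [1, y]]]. [Q] is triangular, and [ABC = 0],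
    [CBCB = 0] split [P^2] into an upper and a lower triangular part with zero product.
    Finally [[a, 0], [c, d]] has the g-Drazin inverse [[a^d, 0], [S, d^d]], whose corner
    [S] is a norm-convergent series: this is where completeness is used. *)

From Stdlib Require Import Reals Lra Lia FunctionalExtensionality IndefiniteDescription List.
Open Scope R_scope.

Arguments vadd_assoc {c}. Arguments vadd_comm {c}. Arguments vadd_zero {c}. Arguments vadd_opp {c}.
Arguments vscal_one {c}. Arguments vscal_mul {c}. Arguments vscal_addl {c}. Arguments vscal_addr {c}.
Arguments vnorm_nonneg {c}. Arguments vnorm_eq0 {c}. Arguments vnorm_triangle {c}. Arguments vnorm_scal {c}.

(** * Normed spaces and bounded linear maps *)

Section NormedSpace.
Context {X : CNormed}.
Implicit Types x y z : X.

Lemma vadd0l x : vadd vzero x = x.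
Proof. rewrite vadd_comm; apply vadd_zero. Qed.

Lemma vaddNl x : vadd (vopp x) x = vzero.
Proof. rewrite vadd_comm; apply vadd_opp. Qed.

Lemma vaddI x y z : vadd x y = vadd x z -> y = z.
Proof.
  intro H. rewrite <- (vadd0l y), <- (vadd0l z), <- (vaddNl x), <- !vadd_assoc, H.
  reflexivity.
Qed.

Lemma vopp_unique x y : vadd x y = vzero -> y = vopp x.
Proof. intro H; apply (vaddI x); rewrite H, vadd_opp; reflexivity. Qed.

Lemma vopp_opp x : vopp (vopp x) = x.
Proof. symmetry; apply vopp_unique, vaddNl. Qed.

Lemma vsub_eq0 x y : vadd x (vopp y) = vzero -> x = y.
Proof. intro H. apply vopp_unique in H. rewrite <- (vopp_opp x), <- H, vopp_opp; reflexivity. Qed.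

Lemma vaddACA x y z w : vadd (vadd x y) (vadd z w) = vadd (vadd x z) (vadd y w).
Proof.
  rewrite <- !vadd_assoc. f_equal. rewrite !vadd_assoc, (vadd_comm y); reflexivity.
Qed.

Lemma vopp_add x y : vopp (vadd x y) = vadd (vopp x) (vopp y).
Proof.
  symmetry; apply vopp_unique.
  rewrite (vadd_comm (vopp x)), vadd_assoc, <- (vadd_assoc x y), vadd_opp, vadd_zero, vadd_opp.
  reflexivity.
Qed.

Lemma vopp0 : vopp (@vzero X) = vzero.
Proof. symmetry; apply vopp_unique, vadd_zero. Qed.

Lemma vscal0 x : vscal (0, 0) x = vzero.
Proof.
  apply (vaddI (vscal (0, 0) x)). rewrite vadd_zero, <- vscal_addl.
  unfold Cadd; simpl. do 2 f_equal; ring.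
Qed.

Lemma vscalv0 a : vscal a (@vzero X) = vzero.
Proof. apply (vaddI (vscal a vzero)). rewrite vadd_zero, <- vscal_addr, vadd_zero; reflexivity. Qed.

Lemma vscal_opp a x : vscal a (vopp x) = vopp (vscal a x).
Proof. apply vopp_unique. rewrite <- vscal_addr, vadd_opp, vscalv0; reflexivity. Qed.

Lemma vopp_scal x : vopp x = vscal (-1, 0) x.
Proof.
  symmetry; apply vopp_unique. rewrite <- (vscal_one x) at 1. rewrite <- vscal_addl, <- (vscal0 x).
  unfold Cadd, Cone; simpl. do 2 f_equal; ring.
Qed.

Lemma Cmod_real r : Cmod (r, 0) = Rabs r.
Proof. unfold Cmod; simpl. rewrite <- sqrt_Rsqr_abs. f_equal. unfold Rsqr; ring. Qed.

Lemma vnorm_opp x : vnorm (vopp x) = vnorm x.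
Proof.
  rewrite vopp_scal, vnorm_scal, Cmod_real, Rabs_left by lra. ring.
Qed.

Lemma vnorm0 : vnorm (@vzero X) = 0.
Proof. rewrite <- (vscal0 vzero), vnorm_scal, Cmod_real, Rabs_R0; ring. Qed.

Lemma vnorm_le0 x : vnorm x <= 0 -> x = vzero.
Proof. intro H; apply vnorm_eq0; pose proof (vnorm_nonneg x); lra. Qed.

Lemma vdistC x y : vdist x y = vdist y x.
Proof.
  unfold vdist. rewrite <- vnorm_opp, vopp_add, vopp_opp, vadd_comm; reflexivity.
Qed.

End NormedSpace.

(** Reflexive decision procedure [abel] for identities in abelian groups: both sides are
    compared through their coefficient vectors over the atoms. *)
Inductive gterm := GAtom (i : nat) | GZero | GAdd (t1 t2 : gterm) | GOpp (t : gterm).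

Fixpoint geval {X : CNormed} (env : list X) (t : gterm) : X :=
  match t with
  | GAtom i => nth i env vzero
  | GZero => vzero
  | GAdd t1 t2 => vadd (geval env t1) (geval env t2)
  | GOpp t => vopp (geval env t)
  end.

Fixpoint gcoef (t : gterm) (j : nat) : R :=
  match t with
  | GAtom i => if Nat.eqb j i then 1 else 0
  | GZero => 0
  | GAdd t1 t2 => gcoef t1 j + gcoef t2 j
  | GOpp t => - gcoef t j
  end.

Fixpoint combination {X : CNormed} (c : nat -> R) (env : list X) : X :=
  match env with
  | nil => vzero
  | x :: env' => vadd (vscal (c O, 0) x) (combination (fun j => c (S j)) env')
  end.

Section Combination.
Context {X : CNormed}.

Lemma combinationD (env : list X) : forall c1 c2,
  combination (fun j => c1 j + c2 j) env = vadd (combination c1 env) (combination c2 env).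
Proof.
  induction env as [|x env IH]; intros; simpl; [now rewrite vadd_zero|].
  rewrite IH, vaddACA, <- vscal_addl. unfold Cadd; simpl. do 3 f_equal; ring.
Qed.

Lemma combinationN (env : list X) : forall c,
  combination (fun j => - c j) env = vopp (combination c env).
Proof.
  induction env as [|x env IH]; intros; simpl; [now rewrite vopp0|].
  rewrite IH, vopp_add, (vopp_scal (vscal _ x)), <- vscal_mul. unfold Cmul; simpl. do 3 f_equal; ring.
Qed.

Lemma combination0 (env : list X) : forall c, (forall j, c j = 0) -> combination c env = vzero.
Proof.
  induction env as [|x env IH]; intros c Hc; simpl; auto.
  rewrite IH, Hc, vscal0, vadd_zero; auto.
Qed.

Lemma combination_atom (env : list X) : forall i,
  combination (fun j => if Nat.eqb j i then 1 else 0) env = nth i env vzero.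
Proof.
  induction env as [|x env IH]; intros [|i]; simpl; auto.
  - rewrite combination0 by reflexivity. rewrite vadd_zero. apply vscal_one.
  - rewrite vscal0, vadd0l, <- IH. reflexivity.
Qed.

Lemma eq_combination (env : list X) : forall c1 c2,
  (forall j, (j < length env)%nat -> c1 j = c2 j) -> combination c1 env = combination c2 env.
Proof.
  induction env as [|x env IH]; intros c1 c2 H; simpl; auto.
  rewrite H by (simpl; lia). f_equal. apply IH. intros; apply H; simpl; lia.
Qed.

Lemma geval_combination (env : list X) t : geval env t = combination (gcoef t) env.
Proof.
  induction t; simpl.
  - symmetry; apply combination_atom.
  - symmetry; apply combination0; auto.
  - rewrite IHt1, IHt2, <- combinationD. reflexivity.
  - rewrite IHt, <- combinationN. reflexivity.
Qed.

Lemma geval_eq (env : list X) t1 t2 :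
  (forall j, (j < length env)%nat -> gcoef t1 j = gcoef t2 j) -> geval env t1 = geval env t2.
Proof. intro H; rewrite !geval_combination; apply eq_combination; auto. Qed.

End Combination.

Ltac g_inlist x l :=
  match l with nil => constr:(false) | cons x _ => constr:(true) | cons _ ?l' => g_inlist x l' end.
Ltac g_atoms t l :=
  match t with
  | vadd ?a ?b => let l1 := g_atoms a l in g_atoms b l1
  | vopp ?a => g_atoms a l
  | vzero => l
  | _ => match g_inlist t l with true => l | false => constr:(cons t l) end
  end.
Ltac g_index x l :=
  match l with cons x _ => constr:(O) | cons _ ?l' => let n := g_index x l' in constr:(S n) end.
Ltac g_reify t l :=
  match t with
  | vadd ?a ?b => let ea := g_reify a l in let eb := g_reify b l in constr:(GAdd ea eb)
  | vopp ?a => let ea := g_reify a l in constr:(GOpp ea)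
  | vzero => constr:(GZero)
  | _ => let i := g_index t l in constr:(GAtom i)
  end.
Ltac abel :=
  match goal with |- @eq ?T ?L ?R =>
    let l0 := constr:(@nil T) in
    let l1 := g_atoms L l0 in let l := g_atoms R l1 in
    let eL := g_reify L l in let eR := g_reify R l in
    change (geval l eL = geval l eR); apply geval_eq; simpl length; intros j Hj;
    repeat (first [lia | destruct j as [|j]; [simpl; lra|]])
  end.

Section LinearMaps.
Context {X Y : CNormed}.

Lemma lin_add (f : X -> Y) x y : bounded_linear f -> f (vadd x y) = vadd (f x) (f y).
Proof. intros [Ha _]; auto. Qed.

Lemma lin0 (f : X -> Y) : bounded_linear f -> f vzero = vzero.
Proof. intro Hf. apply (vaddI (f vzero)). rewrite <- lin_add, !vadd_zero; auto. Qed.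

Lemma lin_opp (f : X -> Y) x : bounded_linear f -> f (vopp x) = vopp (f x).
Proof. intro Hf. apply vopp_unique. rewrite <- lin_add, vadd_opp; auto. apply lin0; auto. Qed.

Lemma lin_sub (f : X -> Y) x y :
  bounded_linear f -> f (vadd x (vopp y)) = vadd (f x) (vopp (f y)).
Proof. intros Hf. rewrite lin_add, lin_opp; auto. Qed.

Lemma lin_bound (f : X -> Y) :
  bounded_linear f -> exists K, 0 < K /\ forall x, vnorm (f x) <= K * vnorm x.
Proof.
  intros [_ [_ [K HK]]]. exists (Rmax K 1). split; [pose proof (Rmax_r K 1); lra|].
  intro x. eapply Rle_trans; [apply HK|].
  apply Rmult_le_compat_r; [apply vnorm_nonneg | apply Rmax_l].
Qed.

End LinearMaps.

Section BoundedLinear.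
Context {X Y Z : CNormed}.

Lemma bl_comp (f : Y -> Z) (g : X -> Y) :
  bounded_linear f -> bounded_linear g -> bounded_linear (fun x => f (g x)).
Proof.
  intros Hf Hg. destruct (lin_bound f Hf) as [Kf [Kf0 HKf]], (lin_bound g Hg) as [Kg [Kg0 HKg]].
  destruct Hf as [Hf1 [Hf2 _]], Hg as [Hg1 [Hg2 _]].
  split; [|split].
  - intros; rewrite Hg1, Hf1; auto.
  - intros; rewrite Hg2, Hf2; auto.
  - exists (Kf * Kg); intro x. eapply Rle_trans; [apply HKf|]. rewrite Rmult_assoc.
    apply Rmult_le_compat_l; [lra | apply HKg].
Qed.

Lemma bl_add (f g : X -> Y) :
  bounded_linear f -> bounded_linear g -> bounded_linear (fun x => vadd (f x) (g x)).
Proof.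
  intros Hf Hg. destruct (lin_bound f Hf) as [Kf [Kf0 HKf]], (lin_bound g Hg) as [Kg [Kg0 HKg]].
  destruct Hf as [Hf1 [Hf2 _]], Hg as [Hg1 [Hg2 _]].
  split; [|split].
  - intros; rewrite Hg1, Hf1. apply vaddACA.
  - intros; rewrite Hg2, Hf2, vscal_addr; auto.
  - exists (Kf + Kg); intro x. eapply Rle_trans; [apply vnorm_triangle|].
    specialize (HKf x); specialize (HKg x). lra.
Qed.

Lemma bl_opp (f : X -> Y) : bounded_linear f -> bounded_linear (fun x => vopp (f x)).
Proof.
  intros Hf. destruct (lin_bound f Hf) as [Kf [Kf0 HKf]]. destruct Hf as [Hf1 [Hf2 _]].
  split; [|split].
  - intros; rewrite Hf1, vopp_add; auto.
  - intros; rewrite Hf2, vscal_opp; auto.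
  - exists Kf; intro x. rewrite vnorm_opp; auto.
Qed.

Lemma bl_id : bounded_linear (fun x : X => x).
Proof. split; [|split]; auto. exists 1; intros; lra. Qed.

Lemma bl_zero : bounded_linear (fun x : X => @vzero Y).
Proof.
  split; [|split].
  - intros; rewrite vadd_zero; auto.
  - intros; rewrite vscalv0; auto.
  - exists 0; intros; rewrite vnorm0; lra.
Qed.

Lemma bl_scal (a : Cplx) : bounded_linear (fun x : X => vscal a x).
Proof.
  split; [|split].
  - intros; apply vscal_addr.
  - intros; rewrite <- !vscal_mul. unfold Cmul; f_equal; f_equal; ring.
  - exists (Cmod a); intros; rewrite vnorm_scal; lra.
Qed.

Lemma bl_fst : bounded_linear (fun p : dsum X Y => fst p).
Proof. split; [|split]; auto. exists 1; intros [x y]; simpl. pose proof (vnorm_nonneg y); lra. Qed.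

Lemma bl_snd : bounded_linear (fun p : dsum X Y => snd p).
Proof. split; [|split]; auto. exists 1; intros [x y]; simpl. pose proof (vnorm_nonneg x); lra. Qed.

Lemma bl_pair (f : Z -> X) (g : Z -> Y) :
  bounded_linear f -> bounded_linear g -> bounded_linear (fun w => ((f w, g w) : dsum X Y)).
Proof.
  intros Hf Hg. destruct (lin_bound f Hf) as [Kf [Kf0 HKf]], (lin_bound g Hg) as [Kg [Kg0 HKg]].
  destruct Hf as [Hf1 [Hf2 _]], Hg as [Hg1 [Hg2 _]].
  split; [|split].
  - intros; simpl; rewrite Hf1, Hg1; auto.
  - intros; simpl; rewrite Hf2, Hg2; auto.
  - exists (Kf + Kg); intro x; simpl. specialize (HKf x); specialize (HKg x). lra.
Qed.

End BoundedLinear.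

Lemma bl_iter {X : CNormed} (f : X -> X) n :
  bounded_linear f -> bounded_linear (fun x => Nat.iter n f x).
Proof. intro Hf. induction n; simpl; [apply bl_id | apply (bl_comp f); auto]. Qed.

Ltac bl_solve :=
  repeat first
    [ assumption | apply bl_id | apply bl_zero | apply bl_fst | apply bl_snd
    | apply bl_pair | apply bl_add | apply bl_opp | apply bl_iter | apply bl_comp ].

(** * Limits *)

Definition conv {X : CNormed} (u : nat -> X) (l : X) : Prop :=
  forall eps, 0 < eps -> exists N, forall n, (N <= n)%nat -> vdist (u n) l < eps.

Section Limits.
Context {X : CNormed}.
Implicit Types (u v : nat -> X) (l m : X).

Lemma conv_unique u l m : conv u l -> conv u m -> l = m.
Proof.
  intros Hl Hm. apply vsub_eq0, vnorm_le0, Rnot_lt_le; intro Hp.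
  destruct (Hl (vnorm (vadd l (vopp m)) / 2)) as [N HN]; [lra|].
  destruct (Hm (vnorm (vadd l (vopp m)) / 2)) as [N' HN']; [lra|].
  specialize (HN (max N N') (Nat.le_max_l _ _)). specialize (HN' (max N N') (Nat.le_max_r _ _)).
  rewrite vdistC in HN. unfold vdist in *.
  pose proof (vnorm_triangle (vadd l (vopp (u (max N N')))) (vadd (u (max N N')) (vopp m))).
  replace (vadd (vadd l (vopp (u (max N N')))) (vadd (u (max N N')) (vopp m)))
    with (vadd l (vopp m)) in H by abel.
  lra.
Qed.

Lemma conv_add u v l m : conv u l -> conv v m -> conv (fun n => vadd (u n) (v n)) (vadd l m).
Proof.
  intros Hu Hv eps Heps.
  destruct (Hu (eps / 2)) as [N HN]; [lra|]. destruct (Hv (eps / 2)) as [N' HN']; [lra|].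
  exists (max N N'); intros n Hn. specialize (HN n ltac:(lia)); specialize (HN' n ltac:(lia)).
  unfold vdist in *.
  replace (vadd (vadd (u n) (v n)) (vopp (vadd l m)))
    with (vadd (vadd (u n) (vopp l)) (vadd (v n) (vopp m))) by (rewrite vopp_add; abel).
  pose proof (vnorm_triangle (vadd (u n) (vopp l)) (vadd (v n) (vopp m))). lra.
Qed.

Lemma conv_ext u v l : (forall n, u n = v n) -> conv u l -> conv v l.
Proof. intros E H eps Heps; destruct (H eps Heps) as [N HN]; exists N; intros; rewrite <- E; auto. Qed.

Lemma conv_shift u l : conv u l -> conv (fun n => u (S n)) l.
Proof. intros H eps Heps; destruct (H eps Heps) as [N HN]; exists N; intros; apply HN; lia. Qed.

Lemma conv_const l : conv (fun _ => l) l.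
Proof. intros eps Heps; exists O; intros; unfold vdist; rewrite vadd_opp, vnorm0; auto. Qed.

Lemma conv_norm_le u l c : conv u l -> (forall n, vnorm (u n) <= c) -> vnorm l <= c.
Proof.
  intros H Hc. apply Rnot_lt_le; intro Hl.
  destruct (H (vnorm l - c)) as [N HN]; [lra|].
  specialize (HN N (le_n _)). specialize (Hc N). rewrite vdistC in HN. unfold vdist in HN.
  pose proof (vnorm_triangle (vadd l (vopp (u N))) (u N)).
  replace (vadd (vadd l (vopp (u N))) (u N)) with l in H0 by abel. lra.
Qed.

End Limits.

Lemma conv_lin {X Y : CNormed} (f : X -> Y) (u : nat -> X) l :
  bounded_linear f -> conv u l -> conv (fun n => f (u n)) (f l).
Proof.
  intros Hf H eps Heps. destruct (lin_bound f Hf) as [K [K0 HK]].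
  destruct (H (eps / K)) as [N HN]; [apply Rdiv_lt_0_compat; auto|].
  exists N; intros n Hn. specialize (HN n Hn). unfold vdist in *.
  rewrite <- lin_sub; auto. eapply Rle_lt_trans; [apply HK|].
  apply Rmult_lt_compat_l with (r := K) in HN; auto. field_simplify in HN; lra.
Qed.

Lemma eq0_of_geometric {X : CNormed} (v : X) c r :
  0 <= r < 1 -> (forall n, vnorm v <= c * r ^ n) -> v = vzero.
Proof.
  intros Hr H. apply vnorm_le0, Rnot_lt_le; intro Hv.
  assert (Hc : 0 < c) by (specialize (H O); simpl in H; lra).
  destruct (pow_lt_1_zero r) with (y := vnorm v / c) as [N HN].
  - rewrite Rabs_right; lra.
  - apply Rdiv_lt_0_compat; auto.
  - specialize (HN N (le_n _)). specialize (H N).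
    rewrite Rabs_right in HN by (apply Rle_ge, pow_le; lra).
    apply Rmult_lt_compat_l with (r := c) in HN; auto. field_simplify in HN; lra.
Qed.

Lemma dsum_complete (X Y : CNormed) : complete X -> complete Y -> complete (dsum X Y).
Proof.
  intros HX HY u Hu.
  destruct (HX (fun n => fst (u n))) as [lx Hx].
  { intros eps Heps. destruct (Hu eps Heps) as [N HN]. exists N; intros m n Hm Hn.
    specialize (HN m n Hm Hn). unfold vdist in *; simpl in HN.
    pose proof (vnorm_nonneg (vadd (snd (u m)) (vopp (snd (u n))))). lra. }
  destruct (HY (fun n => snd (u n))) as [ly Hy].
  { intros eps Heps. destruct (Hu eps Heps) as [N HN]. exists N; intros m n Hm Hn.
    specialize (HN m n Hm Hn). unfold vdist in *; simpl in HN.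
    pose proof (vnorm_nonneg (vadd (fst (u m)) (vopp (fst (u n))))). lra. }
  exists (lx, ly). intros eps Heps.
  destruct (Hx (eps / 2)) as [N HN]; [lra|]. destruct (Hy (eps / 2)) as [N' HN']; [lra|].
  exists (max N N'); intros n Hn. specialize (HN n ltac:(lia)); specialize (HN' n ltac:(lia)).
  unfold vdist in *; simpl. lra.
Qed.

Lemma bl_pointwise_limit {X Y : CNormed} (f : nat -> X -> Y) (s : X -> Y) K :
  (forall n, bounded_linear (f n)) -> (forall n x, vnorm (f n x) <= K * vnorm x) ->
  (forall x, conv (fun n => f n x) (s x)) -> bounded_linear s.
Proof.
  intros Hf HK Hs. split; [|split].
  - intros x y. eapply conv_unique; [apply Hs|].
    eapply conv_ext; [|apply conv_add; [apply (Hs x) | apply (Hs y)]].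
    intro n; simpl. symmetry; apply lin_add; auto.
  - intros a x. eapply conv_unique; [apply Hs|].
    eapply conv_ext; [|apply (conv_lin (fun v => vscal a v)); [apply bl_scal | apply (Hs x)]].
    intro n; simpl. symmetry; apply (Hf n).
  - exists K. intro x. eapply conv_norm_le; [apply Hs|]. intro; apply HK.
Qed.

(** * Quasinilpotent operators *)

Lemma iter_bound {X : CNormed} (f : X -> X) K :
  0 <= K -> (forall x, vnorm (f x) <= K * vnorm x) ->
  forall n x, vnorm (Nat.iter n f x) <= K ^ n * vnorm x.
Proof.
  intros HK Hf. induction n; intro x; simpl; [lra|].
  eapply Rle_trans; [apply Hf|]. rewrite Rmult_assoc. apply Rmult_le_compat_l; auto.
Qed.

Lemma iter_morph {X Y : Type} (f : X -> X) (f' : Y -> Y) (g : X -> Y) :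
  (forall x, g (f x) = f' (g x)) -> forall n x, g (Nat.iter n f x) = Nat.iter n f' (g x).
Proof. intros H n; induction n; intro x; simpl; auto. rewrite H, IHn; auto. Qed.

Lemma iter_sq {X : Type} (f : X -> X) n x :
  Nat.iter n (fun y => f (f y)) x = Nat.iter (n + n) f x.
Proof.
  induction n; simpl; auto. rewrite IHn. replace (n + S n)%nat with (S (n + n)) by lia.
  reflexivity.
Qed.

Lemma iter_comp_succ {W Z : Type} (f : W -> Z) (g : Z -> W) n z :
  Nat.iter (S n) (fun z => f (g z)) z = f (Nat.iter n (fun y => g (f y)) (g z)).
Proof. induction n; simpl; auto. simpl in IHn. rewrite IHn; auto. Qed.

Lemma iter0 {X : CNormed} (f : X -> X) n : bounded_linear f -> Nat.iter n f vzero = vzero.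
Proof. intro H; induction n; simpl; auto. rewrite IHn; apply lin0; auto. Qed.

Definition qnil_uniform {X : CNormed} (a : X -> X) : Prop :=
  forall eps, 0 < eps ->
    exists C, 0 <= C /\ forall n x, vnorm (Nat.iter n a x) <= C * eps ^ n * vnorm x.

Section Quasinilpotent.
Context {X : CNormed}.
Implicit Types a q : X -> X.

Lemma qnil_uniform_ext a q : qnil_uniform a -> (forall x, a x = q x) -> qnil_uniform q.
Proof. intros H E. replace q with a; auto. apply functional_extensionality; auto. Qed.

Lemma qnil_uniformP a : bounded_linear a -> quasinilpotent a -> qnil_uniform a.
Proof.
  intros Ha Hq eps Heps. destruct (Hq eps Heps) as [N HN].
  destruct (lin_bound a Ha) as [K [K0 HK]].
  set (M := Rmax 1 (K / eps)).
  assert (M1 : 1 <= M) by apply Rmax_l.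
  exists (M ^ N). split; [apply pow_le; lra|].
  intros n x. pose proof (vnorm_nonneg x) as Hx.
  assert (HMN : 1 <= M ^ N) by (apply pow_R1_Rle; auto).
  destruct (Compare_dec.le_lt_dec N n) as [Hn|Hn].
  - eapply Rle_trans; [apply HN; auto|]. apply Rmult_le_compat_r; auto.
    assert (0 <= eps ^ n) by (apply pow_le; lra). nra.
  - eapply Rle_trans; [apply (iter_bound a K); [lra | apply HK]|]. apply Rmult_le_compat_r; auto.
    replace K with (K / eps * eps) at 1 by (field; lra). rewrite Rpow_mult_distr.
    apply Rmult_le_compat_r; [apply pow_le; lra|].
    apply Rle_trans with (M ^ n).
    + apply pow_incr. split; [apply Rmult_le_pos; [lra | left; apply Rinv_0_lt_compat; lra]|].
      apply Rmax_r.
    + apply Rle_pow; auto; lia.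
Qed.

Lemma qnil_uniformW a : qnil_uniform a -> quasinilpotent a.
Proof.
  intros Hq eps Heps. destruct (Hq (eps / 2)) as [C [C0 HC]]; [lra|].
  destruct (pow_lt_1_zero (/2)) with (y := / (C + 1)) as [N HN].
  { rewrite Rabs_right; lra. } { apply Rinv_0_lt_compat; lra. }
  exists N. intros n Hn x. eapply Rle_trans; [apply HC|].
  apply Rmult_le_compat_r; [apply vnorm_nonneg|].
  specialize (HN n Hn). rewrite Rabs_right in HN by (apply Rle_ge, pow_le; lra).
  replace (eps / 2) with (/2 * eps) by field. rewrite Rpow_mult_distr, <- Rmult_assoc.
  rewrite <- (Rmult_1_l (eps ^ n)) at 2. apply Rmult_le_compat_r; [apply pow_le; lra|].
  apply Rmult_lt_compat_l with (r := C + 1) in HN; [|lra].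
  rewrite Rinv_r in HN by lra. pose proof (pow_le (/2) n ltac:(lra)). nra.
Qed.

Lemma qnil_nilpotent a k :
  bounded_linear a -> (forall x, Nat.iter k a x = vzero) -> quasinilpotent a.
Proof.
  intros Ha Hk eps Heps. exists k. intros n Hn x.
  replace n with ((n - k) + k)%nat by lia. rewrite Nat.iter_add, Hk, iter0, vnorm0; auto.
  apply Rmult_le_pos; [apply pow_le; lra | apply vnorm_nonneg].
Qed.

Lemma qnil_uniform_sq q : qnil_uniform q -> qnil_uniform (fun x => q (q x)).
Proof.
  intros Hq eps Heps. assert (r0 : 0 < Rmin eps 1) by (apply Rmin_glb_lt; lra).
  pose proof (Rmin_l eps 1). pose proof (Rmin_r eps 1). set (r := Rmin eps 1) in *.
  assert (rr : r * r <= eps) by nra.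
  destruct (Hq r r0) as [C [C0 HC]].
  exists C; split; auto. intros n x. rewrite iter_sq. eapply Rle_trans; [apply HC|].
  apply Rmult_le_compat_r; [apply vnorm_nonneg|]. apply Rmult_le_compat_l; auto.
  rewrite pow_add, <- Rpow_mult_distr. apply pow_incr. split; nra.
Qed.

Lemma qnil_uniform_of_sq q : bounded_linear q -> qnil_uniform (fun x => q (q x)) -> qnil_uniform q.
Proof.
  intros Hl Hq eps Heps. destruct (Hq (eps * eps)) as [C [C0 HC]]; [nra|].
  destruct (lin_bound q Hl) as [K [K0 HK]].
  set (M := Rmax 1 (K / eps)). pose proof (Rmax_l 1 (K / eps)). pose proof (Rmax_r 1 (K / eps)).
  exists (C * M). split; [apply Rmult_le_pos; unfold M; lra|].
  intros n x. pose proof (vnorm_nonneg x) as Hx.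
  destruct (Nat.Even_or_Odd n) as [[m Hm] | [m Hm]]; subst n.
  - replace (2 * m)%nat with (m + m)%nat by lia. rewrite <- iter_sq.
    eapply Rle_trans; [apply HC|]. rewrite pow_add, <- Rpow_mult_distr.
    apply Rmult_le_compat_r; auto. assert (0 <= (eps * eps) ^ m) by (apply pow_le; nra).
    assert (0 <= C * (eps * eps) ^ m) by (apply Rmult_le_pos; auto). unfold M in *; nra.
  - replace (2 * m + 1)%nat with (S (m + m)) by lia. rewrite Nat.iter_succ_r, <- iter_sq.
    assert (Hp : 0 <= (eps * eps) ^ m) by (apply pow_le; nra).
    eapply Rle_trans; [apply HC|]. eapply Rle_trans.
    { apply Rmult_le_compat_l; [apply Rmult_le_pos; auto | apply HK]. }
    simpl. rewrite pow_add, <- Rpow_mult_distr.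
    replace (C * (eps * eps) ^ m * (K * vnorm x))
      with (C * (K / eps) * (eps * (eps * eps) ^ m) * vnorm x) by (field; lra).
    apply Rmult_le_compat_r; auto. apply Rmult_le_compat_r; [apply Rmult_le_pos; lra|].
    apply Rmult_le_compat_l; auto.
Qed.

End Quasinilpotent.

Lemma qnil_uniform_comm {W Z : CNormed} (f : W -> Z) (g : Z -> W) :
  bounded_linear f -> bounded_linear g ->
  qnil_uniform (fun w => g (f w)) -> qnil_uniform (fun z => f (g z)).
Proof.
  intros Hf Hg Hq eps Heps.
  destruct (lin_bound f Hf) as [Kf [Kf0 HKf]], (lin_bound g Hg) as [Kg [Kg0 HKg]].
  destruct (Hq eps Heps) as [C [C0 HC]].
  set (M := Rmax 1 (Kf * C * Kg / eps)).
  assert (M1 : 1 <= M) by apply Rmax_l. assert (M2 : Kf * C * Kg / eps <= M) by apply Rmax_r.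
  exists M. split; [lra|]. intros [|n] z; pose proof (vnorm_nonneg z) as Hz; [simpl; nra|].
  rewrite iter_comp_succ. pose proof (pow_le eps n ltac:(lra)).
  apply Rle_trans with (Kf * (C * eps ^ n * (Kg * vnorm z))).
  { eapply Rle_trans; [apply HKf|]. apply Rmult_le_compat_l; [lra|].
    eapply Rle_trans; [apply HC|]. apply Rmult_le_compat_l; [apply Rmult_le_pos; lra | apply HKg]. }
  replace (Kf * (C * eps ^ n * (Kg * vnorm z))) with (Kf * C * Kg / eps * eps ^ S n * vnorm z)
    by (simpl; field; lra).
  apply Rmult_le_compat_r; auto. apply Rmult_le_compat_r; [apply pow_le; lra | auto].
Qed.

Definition lowtri {X Y : CNormed} (a : X -> X) (c : X -> Y) (d : Y -> Y) : dsum X Y -> dsum X Y :=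
  fun p => (a (fst p), vadd (c (fst p)) (d (snd p))).

Lemma bl_lowtri {X Y : CNormed} (a : X -> X) (c : X -> Y) (d : Y -> Y) :
  bounded_linear a -> bounded_linear c -> bounded_linear d -> bounded_linear (lowtri a c d).
Proof. intros. unfold lowtri. bl_solve. Qed.

Lemma INR_mul_pow_half eps n : 0 < eps -> INR n * (eps / 2) ^ n <= eps ^ n.
Proof.
  intro Heps. assert (H2 : INR n <= 2 ^ n).
  { induction n; [simpl; lra|]. rewrite S_INR. simpl. pose proof (pow_R1_Rle 2 n ltac:(lra)). lra. }
  replace (eps / 2) with (eps * / 2) by field. rewrite Rpow_mult_distr, pow_inv.
  pose proof (pow_lt 2 n ltac:(lra)). pose proof (pow_lt eps n Heps).
  apply (Rmult_le_reg_r (2 ^ n)); auto.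
  replace (INR n * (eps ^ n * / 2 ^ n) * 2 ^ n) with (INR n * eps ^ n) by (field; lra). nra.
Qed.

Section LowerTriangular.
Context {X Y : CNormed} (a : X -> X) (c : X -> Y) (d : Y -> Y).
Hypotheses (Hc : bounded_linear c) (Hd : bounded_linear d).

(** [corner n x] is the lower-left entry [sum_(k < n) d^(n-1-k) c a^k] of the [n]-th power. *)
Fixpoint corner n x : Y :=
  match n with O => vzero | S n => vadd (corner n (a x)) (Nat.iter n d (c x)) end.

Lemma iter_lowtri n x y :
  Nat.iter n (lowtri a c d) ((x, y) : dsum X Y) = (Nat.iter n a x, vadd (corner n x) (Nat.iter n d y)).
Proof.
  revert x y; induction n as [|n IH]; intros x y; [simpl; now rewrite vadd0l|].
  rewrite Nat.iter_succ_r.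
  change (lowtri a c d (x, y)) with ((a x, vadd (c x) (d y)) : dsum X Y).
  rewrite IH, !Nat.iter_succ_r. simpl corner. f_equal.
  rewrite (lin_add (fun y => Nat.iter n d y)) by bl_solve. apply vadd_assoc.
Qed.

Lemma corner_bound eps C1 C2 K :
  0 < eps -> 0 <= C1 -> 0 <= C2 -> 0 <= K ->
  (forall n x, vnorm (Nat.iter n a x) <= C1 * eps ^ n * vnorm x) ->
  (forall n y, vnorm (Nat.iter n d y) <= C2 * eps ^ n * vnorm y) ->
  (forall x, vnorm (c x) <= K * vnorm x) ->
  forall n m x, vnorm (corner n (Nat.iter m a x)) * eps <= INR n * K * C1 * C2 * eps ^ (n + m) * vnorm x.
Proof.
  intros Heps C10 C20 K0 HC1 HC2 HK.
  induction n as [|n IH]; intros m x.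
  - simpl. rewrite vnorm0. pose proof (vnorm_nonneg x). nra.
  - simpl corner. eapply Rle_trans; [apply Rmult_le_compat_r; [lra | apply vnorm_triangle]|].
    rewrite Rmult_plus_distr_r. specialize (IH (S m) x). simpl Nat.iter in IH.
    replace (n + S m)%nat with (S n + m)%nat in IH by lia.
    assert (vnorm (Nat.iter n d (c (Nat.iter m a x))) * eps <= K * C1 * C2 * eps ^ (S n + m) * vnorm x).
    { eapply Rle_trans; [apply Rmult_le_compat_r; [lra | apply HC2]|].
      eapply Rle_trans.
      { apply Rmult_le_compat_r; [lra|]. apply Rmult_le_compat_l.
        - apply Rmult_le_pos; [lra | apply pow_le; lra].
        - eapply Rle_trans; [apply HK | apply Rmult_le_compat_l; [lra | apply HC1]]. }
      rewrite pow_add. simpl. right; ring. }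
    rewrite S_INR. lra.
Qed.

Lemma qnil_uniform_lowtri :
  qnil_uniform a -> qnil_uniform d -> qnil_uniform (lowtri a c d).
Proof.
  intros Hqa Hqd eps Heps. set (δ := eps / 2). assert (Hδ : 0 < δ) by (unfold δ; lra).
  destruct (Hqa δ Hδ) as [C1 [C10 HC1]], (Hqd δ Hδ) as [C2 [C20 HC2]].
  destruct (lin_bound c Hc) as [K [K0 HK]].
  pose proof (corner_bound δ C1 C2 K Hδ C10 C20 ltac:(lra) HC1 HC2 HK) as Hcorner.
  set (C3 := K * C1 * C2 / δ).
  assert (C30 : 0 <= C3) by (apply Rle_mult_inv_pos; [apply Rmult_le_pos; nra | lra]).
  exists (C1 + C2 + C3). split; [lra|].
  intros n [x y]. rewrite iter_lowtri. simpl vnorm.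
  assert (Hdn : δ ^ n <= eps ^ n) by (apply pow_incr; unfold δ; lra).
  pose proof (pow_le δ n ltac:(lra)). pose proof (pow_le eps n ltac:(lra)).
  pose proof (vnorm_nonneg x). pose proof (vnorm_nonneg y).
  assert (E1 : vnorm (Nat.iter n a x) <= C1 * eps ^ n * vnorm x).
  { eapply Rle_trans; [apply HC1|]. apply Rmult_le_compat_r; auto. apply Rmult_le_compat_l; auto. }
  assert (E2 : vnorm (Nat.iter n d y) <= C2 * eps ^ n * vnorm y).
  { eapply Rle_trans; [apply HC2|]. apply Rmult_le_compat_r; auto. apply Rmult_le_compat_l; auto. }
  assert (E3 : vnorm (corner n x) <= C3 * eps ^ n * vnorm x).
  { specialize (Hcorner n O x). simpl Nat.iter in Hcorner. rewrite Nat.add_0_r in Hcorner.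
    pose proof (INR_mul_pow_half eps n Heps) as Hn. fold δ in Hn.
    apply (Rmult_le_reg_r δ); auto. eapply Rle_trans; [apply Hcorner|].
    unfold C3. replace (K * C1 * C2 / δ * eps ^ n * vnorm x * δ) with (K * C1 * C2 * eps ^ n * vnorm x)
      by (field; lra).
    replace (INR n * K * C1 * C2 * δ ^ n * vnorm x) with (K * C1 * C2 * (INR n * δ ^ n) * vnorm x)
      by ring.
    apply Rmult_le_compat_r; auto. apply Rmult_le_compat_l; auto. apply Rmult_le_pos; nra. }
  pose proof (vnorm_triangle (corner n x) (Nat.iter n d y)).
  assert (0 <= C2 * eps ^ n * vnorm x) by (apply Rmult_le_pos; nra).
  assert (0 <= C1 * eps ^ n * vnorm y) by (apply Rmult_le_pos; nra).
  assert (0 <= C3 * eps ^ n * vnorm y) by (apply Rmult_le_pos; nra).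
  nra.
Qed.

End LowerTriangular.

(** * Series *)

Fixpoint psum {X Y : CNormed} (t : nat -> X -> Y) (n : nat) (x : X) : Y :=
  match n with O => vzero | S n => vadd (psum t n x) (t n x) end.

Section Series.
Context {X Y : CNormed} (t : nat -> X -> Y).
Hypothesis Ht : forall n, bounded_linear (t n).

Lemma bl_psum n : bounded_linear (psum t n).
Proof.
  induction n; simpl; [apply bl_zero|].
  apply (bl_add (psum t n) (t n)); auto.
Qed.

Lemma psum_tail_le K n k x :
  (forall n x, vnorm (t n x) <= K * (/2) ^ n * vnorm x) ->
  vnorm (vadd (psum t (n + k) x) (vopp (psum t n x)))
    <= K * vnorm x * (2 * (/2) ^ n - 2 * (/2) ^ (n + k)).
Proof.
  intro HK. induction k.
  - rewrite Nat.add_0_r, vadd_opp, vnorm0. right; ring.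
  - replace (n + S k)%nat with (S (n + k)) by lia. simpl psum.
    replace (vadd (vadd (psum t (n + k) x) (t (n + k)%nat x)) (vopp (psum t n x)))
      with (vadd (vadd (psum t (n + k) x) (vopp (psum t n x))) (t (n + k)%nat x)) by abel.
    eapply Rle_trans; [apply vnorm_triangle|]. specialize (HK (n + k)%nat x).
    replace (K * vnorm x * (2 * (/ 2) ^ n - 2 * (/ 2) ^ S (n + k))) with
      (K * vnorm x * (2 * (/ 2) ^ n - 2 * (/ 2) ^ (n + k)) + K * (/ 2) ^ (n + k) * vnorm x)
      by (simpl; field).
    lra.
Qed.

Lemma series_exists K :
  complete Y -> 0 <= K -> (forall n x, vnorm (t n x) <= K * (/2) ^ n * vnorm x) ->
  exists s : X -> Y, bounded_linear s /\ forall x, conv (fun n => psum t n x) (s x).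
Proof.
  intros HY K0 HK.
  assert (Hb : forall n x, vnorm (psum t n x) <= 2 * K * vnorm x).
  { intros n x. pose proof (psum_tail_le K O n x HK) as Hd. simpl in Hd.
    rewrite vopp0, vadd_zero in Hd. eapply Rle_trans; [apply Hd|].
    pose proof (pow_le (/2) n ltac:(lra)). pose proof (vnorm_nonneg x).
    assert (0 <= K * vnorm x) by (apply Rmult_le_pos; auto). nra. }
  assert (Hc : forall x, exists l, conv (fun n => psum t n x) l).
  { intro x. apply HY. intros eps Heps.
    pose proof (vnorm_nonneg x). assert (0 <= K * vnorm x) by (apply Rmult_le_pos; auto).
    destruct (pow_lt_1_zero (/2)) with (y := eps / (2 * K * vnorm x + 1)) as [N HN].
    { rewrite Rabs_right; lra. } { apply Rdiv_lt_0_compat; lra. }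
    assert (Hm : forall m n, (N <= n)%nat -> (n <= m)%nat -> vdist (psum t m x) (psum t n x) < eps).
    { intros m n Hn Hnm. replace m with (n + (m - n))%nat by lia.
      eapply Rle_lt_trans; [apply psum_tail_le; auto|].
      specialize (HN n Hn). rewrite Rabs_right in HN by (apply Rle_ge, pow_le; lra).
      pose proof (pow_le (/2) (n + (m - n)) ltac:(lra)). pose proof (pow_le (/2) n ltac:(lra)).
      apply Rle_lt_trans with (K * vnorm x * (2 * (/ 2) ^ n)); [nra|].
      apply Rmult_lt_compat_r with (r := 2 * K * vnorm x + 1) in HN; [|lra].
      replace (eps / (2 * K * vnorm x + 1) * (2 * K * vnorm x + 1)) with eps in HN by (field; lra).
      nra. }
    exists N. intros m n Hm' Hn'. destruct (Nat.le_ge_cases n m).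
    - apply Hm; auto.
    - rewrite vdistC; apply Hm; auto. }
  set (s := fun x => proj1_sig (constructive_indefinite_description _ (Hc x))).
  assert (Hs : forall x, conv (fun n => psum t n x) (s x)).
  { intro x. unfold s. destruct (constructive_indefinite_description _ (Hc x)); auto. }
  exists s. split; auto. apply (bl_pointwise_limit (psum t) s (2 * K)); auto. apply bl_psum.
Qed.

Lemma series_invariant_l (s : X -> Y) (L : Y -> Y) :
  bounded_linear L -> (forall x, conv (fun n => psum t n x) (s x)) ->
  (forall n x, L (t n x) = t n x) -> forall x, L (s x) = s x.
Proof.
  intros HL Hs HLt x. eapply conv_unique; [apply conv_lin; [apply HL | apply Hs]|].
  eapply conv_ext; [|apply Hs]. intro n; simpl. symmetry. induction n; simpl.
  - apply lin0; auto.
  - rewrite lin_add, IHn, HLt; auto.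
Qed.

Lemma series_invariant_r (s : X -> Y) (R : X -> X) :
  (forall x, conv (fun n => psum t n x) (s x)) ->
  (forall n x, t n (R x) = t n x) -> forall x, s (R x) = s x.
Proof.
  intros Hs HtR x. eapply conv_unique; [apply Hs|].
  eapply conv_ext; [|apply Hs]. intro n; simpl. induction n; simpl; auto. rewrite IHn, HtR; auto.
Qed.

End Series.

Definition sandwich {X Y : CNormed} (U : Y -> Y) (W : X -> Y) (V : X -> X) (n : nat) (x : X) : Y :=
  Nat.iter n U (W (Nat.iter n V x)).

Section Sandwich.
Context {X Y : CNormed} (U : Y -> Y) (W : X -> Y) (V : X -> X).
Hypotheses (HU : bounded_linear U) (HW : bounded_linear W) (HV : bounded_linear V).

Lemma bl_sandwich n : bounded_linear (sandwich U W V n).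
Proof. unfold sandwich. bl_solve. Qed.

(** One quasinilpotent factor beats any bound on the other one. *)
Lemma sandwich_geometric :
  qnil_uniform U \/ qnil_uniform V ->
  exists K, 0 <= K /\ forall n x, vnorm (sandwich U W V n x) <= K * (/2) ^ n * vnorm x.
Proof.
  intros Hq. destruct (lin_bound U HU) as [KU [KU0 HKU]], (lin_bound W HW) as [KW [KW0 HKW]],
    (lin_bound V HV) as [KV [KV0 HKV]].
  unfold sandwich. destruct Hq as [Hq | Hq].
  - destruct (Hq (/ (2 * KV))) as [C [C0 HC]]; [apply Rinv_0_lt_compat; lra|].
    exists (C * KW). split; [apply Rmult_le_pos; lra|]. intros n x.
    pose proof (vnorm_nonneg x). pose proof (pow_le (/ (2 * KV)) n ltac:(left; apply Rinv_0_lt_compat; lra)).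
    eapply Rle_trans; [apply HC|].
    apply Rle_trans with (C * (/ (2 * KV)) ^ n * (KW * (KV ^ n * vnorm x))).
    { apply Rmult_le_compat_l; [apply Rmult_le_pos; lra|]. eapply Rle_trans; [apply HKW|].
      apply Rmult_le_compat_l; [lra|]. apply (iter_bound V KV); auto; lra. }
    replace (C * (/ (2 * KV)) ^ n * (KW * (KV ^ n * vnorm x)))
      with (C * KW * ((/ (2 * KV)) ^ n * KV ^ n) * vnorm x) by ring.
    rewrite <- Rpow_mult_distr. replace (/ (2 * KV) * KV) with (/2) by (field; lra). lra.
  - destruct (Hq (/ (2 * KU))) as [C [C0 HC]]; [apply Rinv_0_lt_compat; lra|].
    exists (C * KW). split; [apply Rmult_le_pos; lra|]. intros n x.
    pose proof (vnorm_nonneg x). pose proof (pow_le (/ (2 * KU)) n ltac:(left; apply Rinv_0_lt_compat; lra)).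
    pose proof (pow_le KU n ltac:(lra)).
    eapply Rle_trans; [apply (iter_bound U KU); [lra | apply HKU]|].
    apply Rle_trans with (KU ^ n * (KW * (C * (/ (2 * KU)) ^ n * vnorm x))).
    { apply Rmult_le_compat_l; auto. eapply Rle_trans; [apply HKW|].
      apply Rmult_le_compat_l; [lra | apply HC]. }
    replace (KU ^ n * (KW * (C * (/ (2 * KU)) ^ n * vnorm x)))
      with (C * KW * ((/ (2 * KU)) ^ n * KU ^ n) * vnorm x) by ring.
    rewrite <- Rpow_mult_distr. replace (/ (2 * KU) * KU) with (/2) by (field; lra). lra.
Qed.

Lemma sandwich_eq0 (v : Y) (x : X) :
  qnil_uniform U \/ qnil_uniform V -> (forall n, v = sandwich U W V (S n) x) -> v = vzero.
Proof.
  intros Hq Hv. destruct (sandwich_geometric Hq) as [K [K0 HK]].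
  apply (eq0_of_geometric _ (K * vnorm x) (/2)); [lra|]. intro n.
  rewrite (Hv n). eapply Rle_trans; [apply HK|]. simpl.
  pose proof (pow_le (/2) n ltac:(lra)). pose proof (vnorm_nonneg x).
  assert (0 <= K * vnorm x) by (apply Rmult_le_pos; auto). nra.
Qed.

Lemma sandwich_series :
  complete Y -> qnil_uniform U \/ qnil_uniform V ->
  exists s, bounded_linear s /\ forall x, conv (fun n => psum (sandwich U W V) n x) (s x).
Proof.
  intros HY Hq. destruct (sandwich_geometric Hq) as [K [K0 HK]].
  apply (series_exists _ bl_sandwich K); auto.
Qed.

Lemma sandwich_series_fix (s : X -> Y) :
  (forall x, conv (fun n => psum (sandwich U W V) n x) (s x)) ->
  forall x, s x = vadd (W x) (U (s (V x))).
Proof.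
  intros Hs x. eapply conv_unique; [apply conv_shift, (Hs x)|].
  eapply conv_ext; [|apply conv_add; [apply conv_const | apply conv_lin; [apply HU | apply (Hs (V x))]]].
  intro n; cbv beta; symmetry. induction n.
  - simpl. rewrite vadd0l, lin0, vadd_zero; auto.
  - change (psum (sandwich U W V) (S (S n)) x)
      with (vadd (psum (sandwich U W V) (S n) x) (sandwich U W V (S n) x)).
    rewrite IHn. simpl psum at 2. rewrite lin_add, vadd_assoc; auto. f_equal.
    unfold sandwich. rewrite (Nat.iter_succ_r n _ V). reflexivity.
Qed.

End Sandwich.

(** * g-Drazin inverses *)

Definition gDrazin_inv {X : CNormed} (a b : X -> X) : Prop :=
  bounded_linear b /\ (forall v, b (a (b v)) = b v) /\ (forall v, a (b v) = b (a v)) /\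
  quasinilpotent (fun v => vadd (a v) (vopp (a (a (b v))))).

Lemma has_gDrazin_ext {X : CNormed} (f g : X -> X) :
  has_gDrazin f -> (forall x, f x = g x) -> has_gDrazin g.
Proof. intros H E. replace g with f; auto. apply functional_extensionality; auto. Qed.

Lemma has_gDrazin_qnil {X : CNormed} (a : X -> X) :
  bounded_linear a -> quasinilpotent a -> has_gDrazin a.
Proof.
  intros Ha Hq. split; auto. exists (fun _ => vzero). split; [apply bl_zero|]. split; [|split]; auto.
  - intros; apply lin0; auto.
  - replace (fun v => vadd (a v) (vopp (a (a vzero)))) with a; auto.
    apply functional_extensionality; intro v. rewrite !(lin0 a), vopp0, vadd_zero; auto.
Qed.

Lemma has_gDrazin_nilpotent {X : CNormed} (a : X -> X) k :
  bounded_linear a -> (forall x, Nat.iter k a x = vzero) -> has_gDrazin a.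
Proof. intros Ha Hk; apply has_gDrazin_qnil, (qnil_nilpotent a k); auto. Qed.

Definition spid {X : CNormed} (a b : X -> X) (v : X) : X := vadd v (vopp (a (b v))).

Section SpectralIdempotent.
Context {X : CNormed} (a b : X -> X).
Hypotheses (Ha : bounded_linear a) (Hb : gDrazin_inv a b).

Lemma bl_spid : bounded_linear (spid a b).
Proof. destruct Hb as [Hb' _]. unfold spid. bl_solve. Qed.

Lemma spid_comm v : spid a b (a v) = a (spid a b v).
Proof.
  destruct Hb as [_ [_ [H2 _]]]. unfold spid. rewrite (lin_sub a), <- (H2 v); auto.
Qed.

Lemma spid_idem v : spid a b (spid a b v) = spid a b v.
Proof.
  destruct Hb as [Hb' [H1 _]]. unfold spid.
  rewrite (lin_sub b), (lin_sub a), H1, vadd_opp, vopp0, vadd_zero; auto.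
Qed.

Lemma qnil_uniform_spid : qnil_uniform (fun v => a (spid a b v)).
Proof.
  destruct Hb as [Hb' [_ [_ Hq]]].
  apply (qnil_uniform_ext (fun v => vadd (a v) (vopp (a (a (b v)))))).
  - apply qnil_uniformP; auto. bl_solve.
  - intro v. unfold spid. rewrite lin_sub; auto.
Qed.

Lemma gDrazin_inv_comm (s : X -> X) :
  bounded_linear s -> (forall v, s (a v) = a (s v)) -> forall v, s (b v) = b (s v).
Proof.
  intros Hs Hsa. destruct Hb as [Hb' [H1 [H2 _]]].
  assert (Hp : bounded_linear (spid a b)) by apply bl_spid.
  set (q := fun v => a (spid a b v)).
  assert (Hq : bounded_linear q) by (unfold q; bl_solve).
  assert (Hqn : qnil_uniform q) by apply qnil_uniform_spid.
  assert (Hqq : forall w, q (q w) = q (a w)).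
  { intro w; unfold q. rewrite (spid_comm (spid a b w)), spid_idem, (spid_comm w). reflexivity. }
  assert (Hba : forall n x, a (Nat.iter n b x) = Nat.iter n b (a x)) by (apply iter_morph; auto).
  assert (Hbs : forall n z, Nat.iter (S n) b z = Nat.iter (S (S n)) b (a z)).
  { intros n z. rewrite !Nat.iter_succ_r, <- (H2 z), H1. reflexivity. }
  (* with e = a b, one has p s e = 0 and e s p = 0, hence s e = e s e = e s *)
  assert (HU : forall x, spid a b (s (a (b x))) = vzero).
  { intro x. apply (sandwich_eq0 q s b Hq Hs Hb' _ x (or_introl Hqn)).
    unfold sandwich. induction n.
    - simpl. unfold q. rewrite Hsa, spid_comm. reflexivity.
    - rewrite IHn, (Hbs n x), <- Hba, Hsa, Nat.iter_succ_r, <- Hqq, <- !Nat.iter_succ_r.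
      reflexivity. }
  assert (HW : forall x, a (b (s (spid a b x))) = vzero).
  { intro x. apply (sandwich_eq0 b s q Hb' Hs Hq _ x (or_intror Hqn)).
    unfold sandwich. induction n.
    - cbn. unfold q. rewrite Hsa, H2. reflexivity.
    - rewrite IHn, (Hbs n), <- Hsa. do 2 f_equal.
      change (a (q (Nat.iter n q x)) = q (q (Nat.iter n q x))).
      rewrite Hqq. unfold q. rewrite spid_comm. reflexivity. }
  assert (Hse : forall x, s (a (b x)) = a (b (s x))).
  { intro x. transitivity (a (b (s (a (b x))))).
    - apply vsub_eq0, HU.
    - symmetry. apply vsub_eq0. rewrite <- (HW x). unfold spid. rewrite !lin_sub; auto. }
  intro v. rewrite <- (H1 (s v)), <- (Hse v), (Hsa (b v)), <- (H2 (s (b v))), <- (Hse (b v)),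
    (H2 (b v)), H1. reflexivity.
Qed.

End SpectralIdempotent.

Lemma has_gDrazin_sq {X : CNormed} (a : X -> X) : has_gDrazin a -> has_gDrazin (fun v => a (a v)).
Proof.
  intros [Ha [b Hinv]]. pose proof Hinv as [Hb [H1 [H2 _]]].
  split; [bl_solve|]. exists (fun v => b (b v)). split; [bl_solve|]. split; [|split].
  - intro v. rewrite (H2 (b v)), (H1 (a (b v))), (H1 v). reflexivity.
  - intro v. rewrite !H2. reflexivity.
  - apply qnil_uniformW, (qnil_uniform_ext _ _ (qnil_uniform_sq _ (qnil_uniform_spid a b Ha Hinv))).
    intro v. rewrite (spid_comm a b Ha Hinv (spid a b v)), spid_idem by auto.
    unfold spid. rewrite !(lin_sub a), (H2 (b v)), (H1 v); auto.
Qed.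

Lemma has_gDrazin_of_sq {X : CNormed} (a : X -> X) :
  bounded_linear a -> has_gDrazin (fun v => a (a v)) -> has_gDrazin a.
Proof.
  intros Ha [Haa [b Hinv]]. pose proof Hinv as [Hb [H1 [H2 _]]].
  assert (Hab : forall v, a (b v) = b (a v)).
  { apply (gDrazin_inv_comm (fun v => a (a v)) b Haa Hinv a Ha). reflexivity. }
  split; auto. exists (fun v => a (b v)). split; [bl_solve|]. split; [|split].
  - intro v. rewrite H1. reflexivity.
  - intro v. rewrite (Hab v). reflexivity.
  - assert (Hpa : forall v, spid (fun v => a (a v)) b (a v) = a (spid (fun v => a (a v)) b v)).
    { intro v; unfold spid. rewrite (lin_sub a), <- (Hab v); auto. }
    apply qnil_uniformW, (qnil_uniform_ext (fun v => a (spid (fun v => a (a v)) b v))).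
    + apply qnil_uniform_of_sq; [pose proof (bl_spid _ b Haa Hinv); bl_solve|].
      apply (qnil_uniform_ext _ _ (qnil_uniform_spid _ b Haa Hinv)). intro v.
      rewrite (Hpa (spid _ b v)), spid_idem; auto.
    + intro v; unfold spid. rewrite (lin_sub a); auto.
Qed.

(** Cline's formula: if [v u] has a g-Drazin inverse [b], then [u v] has [u b^2 v]. *)
Lemma has_gDrazin_comm {W Z : CNormed} (u : W -> Z) (v : Z -> W) :
  bounded_linear u -> bounded_linear v ->
  has_gDrazin (fun x => v (u x)) -> has_gDrazin (fun z => u (v z)).
Proof.
  intros Hu Hv [Hw [b Hinv]]. pose proof Hinv as [Hb [H1 [H2 _]]]. cbv beta in H1, H2.
  split; [bl_solve|]. exists (fun z => u (b (b (v z)))). split; [bl_solve|]. split; [|split].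
  - intro z. rewrite (H2 (b (v z))), (H1 (v (u (b (v z))))), (H1 (v z)). reflexivity.
  - intro z. rewrite (H2 (b (v z))), (H2 (v z)). reflexivity.
  - set (p := spid (fun x => v (u x)) b).
    assert (Hp : bounded_linear p) by apply (bl_spid _ _ Hw Hinv).
    apply qnil_uniformW, (qnil_uniform_ext (fun z => u (p (v z)))).
    + apply qnil_uniform_comm; [auto | bl_solve|].
      apply (qnil_uniform_ext _ _ (qnil_uniform_spid _ b Hw Hinv)).
      intro y. symmetry; apply (spid_comm _ _ Hw Hinv).
    + intro z. unfold p, spid. rewrite (lin_sub u), (H2 (b (v z))), (H1 (v z)); auto.
Qed.

(** * Triangular operator matrices *)

Section LowerTriangularInverse.
Context {X Y : CNormed} (HY : complete Y) (a ad : X -> X) (c : X -> Y) (d dd : Y -> Y).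
Hypotheses (Ha : bounded_linear a) (Hc : bounded_linear c) (Hd : bounded_linear d).
Hypotheses (Hinva : gDrazin_inv a ad) (Hinvd : gDrazin_inv d dd).

Let Had : bounded_linear ad := proj1 Hinva.
Let Hdd : bounded_linear dd := proj1 Hinvd.
Let A1 : forall v, ad (a (ad v)) = ad v := proj1 (proj2 Hinva).
Let A2 : forall v, a (ad v) = ad (a v) := proj1 (proj2 (proj2 Hinva)).
Let D1 : forall v, dd (d (dd v)) = dd v := proj1 (proj2 Hinvd).
Let D2 : forall v, d (dd v) = dd (d v) := proj1 (proj2 (proj2 Hinvd)).
Let Hpa : bounded_linear (spid a ad) := bl_spid a ad Ha Hinva.
Let Hpd : bounded_linear (spid d dd) := bl_spid d dd Hd Hinvd.

Lemma ddd_dd w : d (dd (dd w)) = dd w.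
Proof. rewrite D2, D1. reflexivity. Qed.

(** [s1 = sum_n dd^(n+2) c p (a p)^n] with [p = spid a ad]. *)
Lemma corner_series_l : exists s1, bounded_linear s1 /\
  (forall x, d (dd (s1 x)) = s1 x) /\ (forall x, s1 (spid a ad x) = s1 x) /\
  (forall x, d (s1 x) = vadd (dd (c (spid a ad x))) (s1 (a x))).
Proof.
  set (W := fun x => dd (dd (c (spid a ad x)))).
  set (q := fun x => a (spid a ad x)).
  assert (HW : bounded_linear W) by (unfold W; bl_solve).
  assert (Hq : bounded_linear q) by (unfold q; bl_solve).
  destruct (sandwich_series dd W q Hdd HW Hq HY (or_intror (qnil_uniform_spid a ad Ha Hinva)))
    as [s [Hs Cs]].
  assert (Hinv : forall x, d (dd (s x)) = s x).
  { apply (series_invariant_l (sandwich dd W q) s (fun y => d (dd y))); auto.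
    - bl_solve.
    - intros [|n] x; unfold sandwich, W; simpl; apply ddd_dd. }
  assert (Hsp : forall x, s (spid a ad x) = s x).
  { apply (series_invariant_r _ s _ Cs). intros n x. unfold sandwich.
    rewrite <- (iter_morph q q (spid a ad)).
    - unfold W. rewrite spid_idem; auto.
    - intro z. unfold q. rewrite spid_comm, spid_idem; auto. }
  exists s. split; [|split; [|split]]; auto.
  intro x. rewrite (sandwich_series_fix dd W q Hdd _ Cs x) at 1. rewrite (lin_add d); auto.
  unfold W. rewrite ddd_dd, Hinv. unfold q. rewrite <- spid_comm, Hsp; auto.
Qed.

(** [s2 = sum_n (d p)^n p c ad^(n+2)] with [p = spid d dd]. *)
Lemma corner_series_r : exists s2, bounded_linear s2 /\
  (forall x, spid d dd (s2 x) = s2 x) /\ (forall x, s2 (a (ad x)) = s2 x) /\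
  (forall x, d (s2 x) = vadd (s2 (a x)) (vopp (spid d dd (c (ad x))))).
Proof.
  set (W := fun x => spid d dd (c (ad (ad x)))).
  set (q := fun y => d (spid d dd y)).
  assert (HW : bounded_linear W) by (unfold W; bl_solve).
  assert (Hq : bounded_linear q) by (unfold q; bl_solve).
  destruct (sandwich_series q W ad Hq HW Had HY (or_introl (qnil_uniform_spid d dd Hd Hinvd)))
    as [s [Hs Cs]].
  assert (Hinv : forall x, spid d dd (s x) = s x).
  { apply (series_invariant_l (sandwich q W ad) s (spid d dd)); auto.
    intros n x. unfold sandwich. rewrite (iter_morph q q (spid d dd)).
    - unfold W. rewrite spid_idem; auto.
    - intro z. unfold q. rewrite spid_comm, spid_idem; auto. }
  assert (Hsa : forall x, s (a (ad x)) = s x).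
  { apply (series_invariant_r _ s (fun x => a (ad x)) Cs). intros [|n] x; unfold sandwich, W.
    - simpl. rewrite A1. reflexivity.
    - rewrite !Nat.iter_succ_r, A1. reflexivity. }
  exists s. split; [|split; [|split]]; auto.
  intro x. pose proof (sandwich_series_fix q W ad Hq _ Cs (a x)) as H. unfold q, W in H.
  rewrite Hinv, <- (A2 x), A1, Hsa in H. rewrite H. abel.
Qed.

(** [S = s1 + s2 - dd c ad] is the lower-left entry of the g-Drazin inverse
    [e = [[ad, 0], [S, dd]]] of [M = [[a, 0], [c, d]]]: the two identities are the
    lower-left entries of [e M = M e] and [e M e = e]. *)
Lemma lowtri_corner : exists S, bounded_linear S /\
  (forall x, vadd (c (ad x)) (d (S x)) = vadd (S (a x)) (dd (c x))) /\
  (forall x, vadd (vadd (S (a (ad x))) (dd (c (ad x)))) (dd (d (S x))) = S x).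
Proof.
  destruct corner_series_l as [s1 [Hs1 [F1a [F1b Ei]]]].
  destruct corner_series_r as [s2 [Hs2 [F2a [F2b Eii]]]].
  set (K := fun x => dd (c (ad x))).
  exists (fun x => vadd (vadd (s1 x) (s2 x)) (vopp (K x))). split; [unfold K; bl_solve | split].
  - intro x. rewrite (lin_sub d), (lin_add d), Ei, Eii; auto.
    unfold K. rewrite <- (A2 x). unfold spid. rewrite (lin_sub c), (lin_sub dd); auto. abel.
  - intro x. rewrite (lin_sub d), (lin_add d), (lin_sub dd), (lin_add dd); auto.
    assert (Hs1z : s1 (a (ad x)) = vzero).
    { rewrite <- F1b. unfold spid. rewrite A1, vadd_opp. apply lin0; auto. }
    assert (Hs2z : dd (d (s2 x)) = vzero).
    { rewrite <- F2a. unfold spid. rewrite (lin_sub d), (lin_sub dd), (D2 (s2 x)), (D1 (d (s2 x))); auto.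
      apply vadd_opp. }
    rewrite Hs1z, F2b, Hs2z, <- (D2 (s1 x)), F1a. unfold K. rewrite A1, D1. abel.
Qed.

Lemma gDrazin_inv_lowtri : exists e, gDrazin_inv (lowtri a c d) e.
Proof.
  destruct lowtri_corner as [S [HS [E1 E2]]].
  exists (fun p : dsum X Y => ((ad (fst p), vadd (S (fst p)) (dd (snd p))) : dsum X Y)).
  split; [bl_solve | split; [|split]].
  - intros [x y]. unfold lowtri; simpl. f_equal; [apply A1|].
    rewrite !(lin_add dd), (lin_add d), (lin_add dd), (D1 y); auto.
    transitivity (vadd (vadd (vadd (S (a (ad x))) (dd (c (ad x)))) (dd (d (S x)))) (dd y)); [abel|].
    rewrite E2. reflexivity.
  - intros [x y]. unfold lowtri; simpl. f_equal; [apply A2|].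
    rewrite (lin_add d), (lin_add dd), (D2 y); auto.
    transitivity (vadd (vadd (c (ad x)) (d (S x))) (dd (d y))); [abel|].
    rewrite E1. abel.
  - pose proof (proj2 (proj2 (proj2 Hinva))) as Qa. pose proof (proj2 (proj2 (proj2 Hinvd))) as Qd.
    set (c' := fun x => vadd (c x) (vopp (vadd (c (a (ad x))) (vadd (d (c (ad x))) (d (d (S x))))))).
    apply qnil_uniformW, (qnil_uniform_ext
      (lowtri (fun x => vadd (a x) (vopp (a (a (ad x))))) c' (fun y => vadd (d y) (vopp (d (d (dd y))))))).
    + apply qnil_uniform_lowtri; unfold c'; try (apply qnil_uniformP; auto); bl_solve.
    + intros [x y]. unfold lowtri, c'; simpl. f_equal. rewrite !(lin_add d); auto. abel.
Qed.

End LowerTriangularInverse.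

Lemma has_gDrazin_lowtri {X Y : CNormed} (a : X -> X) (c : X -> Y) (d : Y -> Y) :
  complete Y -> bounded_linear c -> has_gDrazin a -> has_gDrazin d -> has_gDrazin (lowtri a c d).
Proof.
  intros HY Hc [Ha [ad Hinva]] [Hd [dd Hinvd]]. split; [apply bl_lowtri; auto|].
  apply (gDrazin_inv_lowtri HY a ad c d dd); auto.
Qed.

Definition uptri {X Y : CNormed} (a : X -> X) (b : Y -> X) (d : Y -> Y) : dsum X Y -> dsum X Y :=
  fun p => (vadd (a (fst p)) (b (snd p)), d (snd p)).

Lemma has_gDrazin_uptri {X Y : CNormed} (a : X -> X) (b : Y -> X) (d : Y -> Y) :
  complete X -> bounded_linear b -> has_gDrazin a -> has_gDrazin d -> has_gDrazin (uptri a b d).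
Proof.
  intros HX Hb Ga Gd. pose proof Ga as [Ha _]. pose proof Gd as [Hd _].
  pose proof (has_gDrazin_lowtri d b a HX Hb Gd Ga) as Hlow.
  set (swap := fun q : dsum Y X => ((snd q, fst q) : dsum X Y)).
  set (swap' := fun p : dsum X Y => ((snd p, fst p) : dsum Y X)).
  assert (Hswap : bounded_linear swap) by (unfold swap; bl_solve).
  assert (Hswap' : bounded_linear swap') by (unfold swap'; bl_solve).
  apply (has_gDrazin_ext (fun p => swap (lowtri d b a (swap' p)))).
  - apply (has_gDrazin_comm (fun q => swap (lowtri d b a q)) swap'); [| auto |].
    + pose proof (bl_lowtri d b a Hd Hb Ha). bl_solve.
    + apply (has_gDrazin_ext _ _ Hlow). intros [y x]; reflexivity.
  - intros [x y]. unfold swap, swap', lowtri, uptri; simpl. f_equal. apply vadd_comm.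
Qed.

Lemma has_gDrazin_add_ab0 {Z : CNormed} (a b : Z -> Z) :
  complete Z -> has_gDrazin a -> has_gDrazin b -> (forall z, a (b z) = vzero) ->
  has_gDrazin (fun z => vadd (a z) (b z)).
Proof.
  intros HZ Ga Gb Hab. pose proof Ga as [Ha _]. pose proof Gb as [Hb _].
  pose proof (has_gDrazin_lowtri a (fun z => z) b HZ bl_id Ga Gb) as Hlow.
  set (u := fun w : dsum Z Z => vadd (fst w) (b (snd w))).
  set (v := fun z : Z => ((a z, z) : dsum Z Z)).
  apply (has_gDrazin_comm u v); [unfold u; bl_solve | unfold v; bl_solve |].
  apply (has_gDrazin_ext _ _ Hlow). intros [z1 z2]. unfold u, v, lowtri; simpl.
  rewrite (lin_add a), Hab, vadd_zero; auto.
Qed.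

Lemma has_gDrazin_add_baa_bab {Z : CNormed} (a b : Z -> Z) :
  complete Z -> has_gDrazin a -> has_gDrazin b ->
  (forall z, b (a (a z)) = vzero) -> (forall z, b (a (b z)) = vzero) ->
  has_gDrazin (fun z => vadd (a z) (b z)).
Proof.
  intros HZ Ga Gb Haa Hab. pose proof Ga as [Ha _]. pose proof Gb as [Hb _].
  set (s := fun z => vadd (a z) (b z)).
  assert (Hs : bounded_linear s) by (unfold s; bl_solve).
  assert (Gas : has_gDrazin (fun z => a (s z))).
  { apply (has_gDrazin_comm a s Ha Hs), (has_gDrazin_ext (fun z => vadd (b (a z)) (a (a z)))).
    - apply has_gDrazin_add_ab0; auto.
      + apply (has_gDrazin_nilpotent _ 2); [bl_solve|]. intro z; apply Hab.
      + apply has_gDrazin_sq; auto.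
    - intro z; apply vadd_comm. }
  assert (Gbs : has_gDrazin (fun z => b (s z))).
  { apply (has_gDrazin_comm b s Hb Hs), (has_gDrazin_ext (fun z => vadd (b (b z)) (a (b z)))).
    - apply has_gDrazin_add_ab0; auto.
      + apply has_gDrazin_sq; auto.
      + apply (has_gDrazin_nilpotent _ 2); [bl_solve|]. intro z; simpl. rewrite Hab. apply lin0; auto.
      + intro z. rewrite Hab. apply lin0; auto.
    - intro z; apply vadd_comm. }
  apply has_gDrazin_of_sq; auto. apply (has_gDrazin_ext (fun z => vadd (b (s z)) (a (s z)))).
  - apply has_gDrazin_add_ab0; auto. intro z. unfold s.
    rewrite (lin_add b), (Haa (vadd (a z) (b z))), vadd0l; auto.
    rewrite (lin_add a), (lin_add b), Haa, Hab, vadd_zero, (lin0 b); auto.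
  - intro z. apply vadd_comm.
Qed.

Lemma has_gDrazin_zero {X : CNormed} : has_gDrazin (fun _ : X => @vzero X).
Proof. apply (has_gDrazin_nilpotent _ 1); [apply bl_zero | reflexivity]. Qed.

Lemma has_gDrazin_opmat_diag {X Y : CNormed} (D : Y -> Y) :
  complete Y -> has_gDrazin D ->
  has_gDrazin (opmat (fun _ => vzero) (fun _ => vzero) (fun _ : X => vzero) D).
Proof.
  intros HY GD.
  apply (has_gDrazin_ext _ _ (has_gDrazin_lowtri _ _ D HY bl_zero has_gDrazin_zero GD)).
  intros [x y]. unfold lowtri, opmat; simpl. f_equal; abel.
Qed.

(** [P^2 = [[A^2 + B C, A B], [0, 0]] + [[0, 0], [C A, C B]]], a sum with zero product. *)
Lemma has_gDrazin_opmat_corner0 {X Y : CNormed} (A : X -> X) (B : Y -> X) (C : X -> Y) :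
  complete X -> complete Y -> bounded_linear B -> bounded_linear C -> has_gDrazin A ->
  (forall x, A (B (C x)) = vzero) -> (forall y, C (B (C (B y))) = vzero) ->
  has_gDrazin (opmat A B C (fun _ => vzero)).
Proof.
  intros HX HY HB HC GA hABC hCBCB. pose proof GA as [HA _].
  apply has_gDrazin_of_sq; [unfold opmat; bl_solve|].
  apply (has_gDrazin_ext (fun p =>
    vadd (uptri (fun x => vadd (A (A x)) (B (C x))) (fun y => A (B y)) (fun _ => vzero) p)
         (lowtri (fun _ => vzero) (fun x => C (A x)) (fun y => C (B y)) p))).
  - apply has_gDrazin_add_ab0; [apply dsum_complete; auto | | |].
    + apply has_gDrazin_uptri; [auto | bl_solve | | apply has_gDrazin_zero].
      apply has_gDrazin_add_ab0; auto; [apply has_gDrazin_sq; auto | |].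
      * apply (has_gDrazin_nilpotent _ 3); [bl_solve|]. intro x; simpl. rewrite hCBCB. apply lin0; auto.
      * intro x. rewrite hABC. apply lin0; auto.
    + apply has_gDrazin_lowtri; [auto | bl_solve | apply has_gDrazin_zero |].
      apply (has_gDrazin_nilpotent _ 2); [bl_solve | intro y; apply hCBCB].
    + intros [x y]. unfold uptri, lowtri; simpl. f_equal.
      rewrite (lin0 C), (lin0 B), !(lin0 A), <- (lin_add C), hABC, !vadd_zero; auto.
  - intros [x y]. unfold uptri, lowtri, opmat; simpl. f_equal.
    + rewrite (lin_add A), !vadd_zero; auto. abel.
    + rewrite (lin_add C); auto. abel.
Qed.

Theorem theorem3p8 (X Y : CNormed) (HX : complete X) (HY : complete Y)
  (A : X -> X) (B : Y -> X) (C : X -> Y) (D : Y -> Y)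
  (hB : bounded_linear B) (hC : bounded_linear C)
  (gA : has_gDrazin A) (gD : has_gDrazin D)
  (hABC : forall x, A (B (C x)) = vzero)
  (hDCA : forall x, D (C (A x)) = vzero)
  (hDCB : forall y, D (C (B y)) = vzero)
  (hCBCB : forall y, C (B (C (B y))) = vzero) :
  has_gDrazin (opmat A B C D).
Proof.
  pose proof gA as [hA _]. pose proof gD as [hD _].
  set (P := opmat A B C (fun _ => vzero)).
  set (Q := opmat (fun _ => vzero) (fun _ => vzero) (fun _ : X => vzero) D).
  apply (has_gDrazin_ext (fun p => vadd (P p) (Q p))).
  - apply has_gDrazin_add_baa_bab.
    + apply dsum_complete; auto.
    + apply has_gDrazin_opmat_corner0; auto.
    + apply has_gDrazin_opmat_diag; auto.
    + intros [x y]. unfold P, Q, opmat; simpl. f_equal; [abel|].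
      rewrite !vadd_zero, (lin_add C), (lin_add D), hDCA, hDCB; auto. abel.
    + intros [x y]. unfold P, Q, opmat; simpl.
      rewrite !vadd_zero, (lin0 C), (lin0 D); auto. f_equal; abel.
  - intros [x y]. unfold P, Q, opmat; simpl. f_equal; abel.
Qed.
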